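(* Let $k\geq p\geq 0$ and $n\geq 2k-p+2$ be integers, and let $G$ be an $(n+p+2)$-closed balanced bipartite graph of order $2n$. If $$e(G)>n(n-k+p-1)+(k+2)(k-p+1),$$ then $G$ contains a complete bipartite subgraph of order $2n-k+p$. Furthermore, if $\delta(G)\geq k$, then $K_{n,n-k+p}\subseteq G$, or $k=p+2$ and $G\in\{N_{n,n}^{p,1},N_{n,n}^{p,2}\}$.
   Context: A bipartite graph $G=(X,Y;E)$ is balanced if $|X|=|Y|$. For an integer $r$, $G$ is $r$-closed if $d_G(x)+d_G(y)<r$ for every non-adjacent pair $x\in X$, $y\in Y$. $e(G)$ is the number of edges, $\delta(G)$ the minimum degree; $K_{a,b}\subseteq G$ means $G$ has a subgraph isomorphic to the complete bipartite graph $K_{a,b}$; $G\in\{\dots\}$ means up to isomorphism. $N_{n,n}^{p,1}$: parts $X=X_1\cup X_2\cup X_3$, $Y=Y_1\cup Y_2\cup Y_3$, $|X_1|=|Y_1|=n-p-2$, $|X_2|=|Y_2|=p+1$, $|X_3|=|Y_3|=1$; edges are all pairs between $X_i$ and $Y_i$ ($i=1,2,3$), between $X_1$ and $Y_2$, between $X_2$ and $Y_1\cup Y_3$, and between $X_3$ and $Y_2$. $N_{n,n}^{p,2}$: parts $X=X_1\cup X_2\cup X_3$, $Y=Y_1\cup Y_2\cup Y_3$, $|X_1|=|Y_1|=n-p-3$, $|X_2|=|Y_2|=p+2$, $|X_3|=|Y_3|=1$; edges are all pairs between $X_1$ and $Y_1$, between $X_2$ and $Y_2$, between $X_1$ and $Y_2$,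 between $X_2$ and $Y_1\cup Y_3$, and between $X_3$ and $Y_2$ (no edge between $X_3$ and $Y_3$). *)

(* A balanced bipartite graph G = (X,Y;E) of order 2n is
   represented with X = 'I_n, Y = 'I_n and adjacency G : 'I_n -> 'I_n -> bool,
   where G x y means x in X is adjacent to y in Y. *)
From mathcomp Require Import all_boot all_order all_fingroup.
Set Implicit Arguments. Unset Strict Implicit. Unset Printing Implicit Defensive.

Definition bigraph (n : nat) := 'I_n -> 'I_n -> bool.

Definition degX n (G : bigraph n) (x : 'I_n) : nat := #|[set y | G x y]|.
Definition degY n (G : bigraph n) (y : 'I_n) : nat := #|[set x | G x y]|.

Definition nedges n (G : bigraph n) : nat := #|[set e : 'I_n * 'I_n | G e.1 e.2]|.

Definition closed_bip (r : nat) n (G : bigraph n) : Prop :=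
  forall x y, ~~ G x y -> degX G x + degY G y < r.

Definition mindeg_ge n (G : bigraph n) (k : nat) : Prop :=
  (forall x, k <= degX G x) /\ (forall y, k <= degY G y).

Definition complete_on n (G : bigraph n) (A B : {set 'I_n}) : Prop :=
  forall x y, x \in A -> y \in B -> G x y.

Definition has_Kbip_order n (G : bigraph n) (m : nat) : Prop :=
  exists A B : {set 'I_n}, complete_on G A B /\ #|A| + #|B| = m.

(* K_{a,b} is a subgraph of G (either orientation, as K_{a,b} ~ K_{b,a}) *)
Definition has_Kab n (G : bigraph n) (a b : nat) : Prop :=
  exists A B : {set 'I_n}, complete_on G A B /\
    ((#|A| = a /\ #|B| = b) \/ (#|A| = b /\ #|B| = a)).

Definition bip_iso n (G H : bigraph n) : Prop :=
  exists s t : {perm 'I_n},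
    (forall x y, G x y = H (s x) (t y)) \/ (forall x y, G x y = H (t y) (s x)).

(* N^{p,1}_{n,n}: X1 = {i < n-p-2}, X2 = {n-p-2 <= i < n-1}, X3 = {n-1}, same for Y *)
Definition cls1 (n p : nat) (i : nat) : nat :=
  if i < n - p - 2 then 1 else if i < n - 1 then 2 else 3.
Definition N1 (n p : nat) : bigraph n := fun x y =>
  let a := cls1 n p x in let b := cls1 n p y in
  [|| (a == b), (a == 1) && (b == 2), (a == 2) && (b == 1),
      (a == 2) && (b == 3) | (a == 3) && (b == 2)].

(* N^{p,2}_{n,n}: X1 = {i < n-p-3}, X2 = {n-p-3 <= i < n-1}, X3 = {n-1} *)
Definition cls2 (n p : nat) (i : nat) : nat :=
  if i < n - p - 3 then 1 else if i < n - 1 then 2 else 3.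
Definition N2 (n p : nat) : bigraph n := fun x y =>
  let a := cls2 n p x in let b := cls2 n p y in
  [|| (a == 1) && (b == 1), (a == 2) && (b == 2), (a == 1) && (b == 2),
      (a == 2) && (b == 1), (a == 2) && (b == 3) | (a == 3) && (b == 2)].
Arguments N1 n p : clear implicits.
Arguments N2 n p : clear implicits.

(* Pass to the bipartite complement H of G.  Closedness of G says that every
   edge xy of H has d_H(x) + d_H(y) >= n - p - 1, and the edge bound says that
   e(H) < (k - p + 1)(n - k - 2).  Such an H has a vertex cover with at most
   k - p vertices: a vertex of degree >= n - k - 2 can be put into the cover and
   deleted, which lowers every remaining degree sum by at most one; and if all
   degrees are smaller, an edge xy already yields
   d(x) (n - p - 1 - d(x)) >= (k - p + 1)(n - k - 2) edges at the neighbours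
   of x.  The vertices outside a cover span a complete bipartite subgraph of G
   of order at least 2n - k + p.

   For the second part take a minimum cover (C_X, C_Y).  If one side is empty
   the other side's complement gives K_{n, n-k+p}.  Otherwise each x in C_X has
   a private neighbour y outside C_Y, whose H-neighbours all lie in C_X; with
   d_G >= k this gives |C_X| >= k - p - 1, and likewise |C_Y| >= k - p - 1.
   As |C_X| + |C_Y| <= k - p, this forces k = p + 2, C_X = {x0}, C_Y = {y0} and
   d_G(x0) = d_G(y0) = k.  Then G is complete off x0 and y0, and it is
   N^{p,1} or N^{p,2} according to whether x0 y0 is an edge. *)

From mathcomp Require Import all_boot all_order all_fingroup.
From mathcomp Require Import zify.
Set Implicit Arguments. Unset Strict Implicit. Unset Printing Implicit Defensive.

Lemma exists_subset_card (T : finType) (A : {set T}) m :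
  m <= #|A| -> exists2 B : {set T}, B \subset A & #|B| = m.
Proof.
elim: m => [|m IH] leA; first by exists set0; rewrite ?sub0set ?cards0.
have [B sBA cardB] := IH (ltnW leA).
have /card_gt0P [x] : 0 < #|A :\: B| by rewrite cardsDS //; lia.
rewrite inE => /andP [xNB xA].
by exists (x |: B); rewrite ?subUset ?sub1set ?xA // cardsU1 xNB cardB.
Qed.

Lemma count_iota_range m lo hi :
  count (fun i => lo <= i < hi) (iota 0 m) = minn m hi - lo.
Proof.
elim: m => [|m IH]; first by rewrite min0n.
rewrite -addn1 iotaD count_cat IH /= add0n addn0.
by case: (leqP lo m); case: (ltnP m hi) => /=; lia.
Qed.

(* [cls1 n p] and [cls2 n p] are [interval_class (n - p - 2) (n - 1)] and
   [interval_class (n - p - 3) (n - 1)]. *)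
Definition interval_class (b1 b2 i : nat) : nat :=
  if i < b1 then 1 else if i < b2 then 2 else 3.

Section BipartiteGraphs.

Variable n : nat.
Implicit Types (G h : bigraph n) (x y : 'I_n) (A B CX CY : {set 'I_n}).

Definition btr G : bigraph n := fun x y => G y x.
Definition bcompl G : bigraph n := fun x y => ~~ G x y.

Lemma cardsC_ord A : #|~: A| = n - #|A|.
Proof. by have := cardsC A; rewrite card_ord; lia. Qed.

Lemma nedges_sum_degX h : nedges h = \sum_x degX h x.
Proof.
rewrite /degX; under eq_bigr do rewrite -sum1dep_card.
by rewrite pair_big_dep sum1dep_card.
Qed.

Lemma nedges_sum_degY h : nedges h = \sum_y degY h y.
Proof.
rewrite nedges_sum_degX /degX /degY.
under eq_bigr => x _ do rewrite -sum1dep_card.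
under eq_bigr => x _ do rewrite big_mkcond.
by rewrite exchange_big; apply: eq_bigr => y _; rewrite -big_mkcond sum1dep_card.
Qed.

Lemma degY_btr h x : degY (btr h) x = degX h x.
Proof. by []. Qed.

Lemma nedges_btr h : nedges (btr h) = nedges h.
Proof. by rewrite nedges_sum_degX nedges_sum_degY. Qed.

Lemma degX_bcompl G x : degX (bcompl G) x + degX G x = n.
Proof.
rewrite addnC -[RHS]card_ord -(cardsC [set y | G x y]).
by congr (_ + _); apply: eq_card => y; rewrite !inE.
Qed.

Lemma degY_bcompl G y : degY (bcompl G) y + degY G y = n.
Proof. exact: (degX_bcompl (btr G)). Qed.

Lemma nedges_bcompl G : nedges (bcompl G) + nedges G = n * n.
Proof.
transitivity #|{: 'I_n * 'I_n}|; last by rewrite card_prod card_ord.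
rewrite addnC -(cardsC [set e | G e.1 e.2]).
by congr (_ + _); apply: eq_card => e; rewrite !inE.
Qed.

Definition edge_degree_sum_ge h s := forall x y, h x y -> s <= degX h x + degY h y.

Lemma edge_degree_sum_ge_btr h s :
  edge_degree_sum_ge h s -> edge_degree_sum_ge (btr h) s.
Proof. by move=> hs x y /hs; rewrite addnC. Qed.

Lemma closed_bip_compl r G :
  closed_bip r G -> edge_degree_sum_ge (bcompl G) ((2 * n).+1 - r).
Proof.
move=> clG x y /clG ltr.
by have := degX_bcompl G x; have := degY_bcompl G y; lia.
Qed.

Definition cover h CX CY : bool :=
  [forall x, forall y, h x y ==> (x \in CX) || (y \in CY)].

Lemma coverP h CX CY :
  reflect (forall x y, h x y -> (x \in CX) || (y \in CY)) (cover h CX CY).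
Proof.
apply: (iffP forallP) => [hc x y | hc x]; first exact: implyP (forallP (hc x) y).
by apply/forallP => y; apply/implyP/hc.
Qed.

Lemma cover_btr h CX CY : cover (btr h) CY CX = cover h CX CY.
Proof.
by apply/coverP/coverP => hc x y /(hc y x); rewrite orbC.
Qed.

Definition has_cover_le h m := exists CX CY, cover h CX CY /\ #|CX| + #|CY| <= m.

Lemma has_cover_le_btr h m : has_cover_le (btr h) m -> has_cover_le h m.
Proof. by case=> CY [CX [hc le_m]]; exists CX, CY; rewrite -cover_btr addnC. Qed.

Lemma cover_bcompl_complete G CX CY :
  cover (bcompl G) CX CY -> complete_on G (~: CX) (~: CY).
Proof.
move=> /coverP hc x y; rewrite !inE => xNC yNC; apply/negPn/negP => /hc.
by rewrite (negbTE xNC) (negbTE yNC).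
Qed.

Definition delX h x0 : bigraph n := fun x y => h x y && (x != x0).

Section DeleteVertex.

Variables (h : bigraph n) (x0 : 'I_n).

Lemma degX_delX x : x != x0 -> degX (delX h x0) x = degX h x.
Proof. by move=> xNx0; apply: eq_card => y; rewrite !inE /delX xNx0 andbT. Qed.

Lemma degY_delX y : degY (delX h x0) y + h x0 y = degY h y.
Proof.
rewrite /degY (cardsD1 x0 [set x | h x y]) inE addnC.
by congr (_ + _); apply: eq_card => x; rewrite !inE /delX andbC.
Qed.

Lemma nedges_delX : nedges (delX h x0) + degX h x0 = nedges h.
Proof.
rewrite !nedges_sum_degX (bigD1 x0) //= [in RHS](bigD1 x0) //=.
have -> : degX (delX h x0) x0 = 0.
  by apply: eq_card0 => y; rewrite !inE /delX eqxx andbF.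
by rewrite add0n addnC; congr (_ + _); apply: eq_bigr => x; apply: degX_delX.
Qed.

Lemma edge_degree_sum_ge_delX s :
  edge_degree_sum_ge h s.+1 -> edge_degree_sum_ge (delX h x0) s.
Proof.
move=> hs x y /andP [hxy xNx0]; have := hs x y hxy; have := degY_delX y.
by rewrite degX_delX //; case: (h x0 y) => /=; lia.
Qed.

Lemma cover_delX CX CY : cover (delX h x0) CX CY -> cover h (x0 |: CX) CY.
Proof.
move=> /coverP hc; apply/coverP => x y hxy; rewrite in_setU1.
by case: (eqVneq x x0) => //= xNx0; apply: hc; rewrite /delX hxy.
Qed.

End DeleteVertex.

Lemma degX_le_nedges h x : degX h x <= nedges h.
Proof. by rewrite nedges_sum_degX (bigD1 x) //= leq_addr. Qed.

Lemma degY_le_nedges h y : degY h y <= nedges h.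
Proof. by rewrite -nedges_btr; apply: degX_le_nedges. Qed.

Section VertexCover.

Variable a : nat.

Lemma small_degrees_cover q h :
  edge_degree_sum_ge h (a + q + 1) ->
  (forall x, degX h x < a) -> (forall y, degY h y < a) ->
  nedges h < q.+1 * a -> has_cover_le h q.
Proof.
move=> hs ltX ltY ltN; exists set0, set0; split; last by rewrite cards0.
apply/coverP => x y hxy; exfalso.
have := hs x y hxy; have := ltX x; have := ltY y.
set d := degX h x => ltdY ltdX le_sum.
have : \sum_(y' | h x y') (a + q + 1 - d) <= nedges h.
  rewrite nedges_sum_degY [leqRHS](bigID (h x)) /=; apply: (leq_trans _ (leq_addr _ _)).
  by apply: leq_sum => y' /hs; rewrite -/d; lia.
rewrite sum_nat_cond_const -/(degX h x) -/d; nia.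
Qed.

Section HighDegree.

Variable q : nat.
Hypothesis cover_IH : forall h,
  edge_degree_sum_ge h (a + q + 1) -> nedges h < q.+1 * a -> has_cover_le h q.

Lemma high_degX_cover h x0 :
  edge_degree_sum_ge h (a + q.+1 + 1) -> nedges h < q.+2 * a ->
  a <= degX h x0 -> has_cover_le h q.+1.
Proof.
move=> hs ltN le_a.
have hs' : edge_degree_sum_ge (delX h x0) (a + q + 1).
  by apply: edge_degree_sum_ge_delX; move: hs; rewrite !addn1 addnS.
have ltN' : nedges (delX h x0) < q.+1 * a by have := nedges_delX h x0; nia.
have [CX [CY [hc le_q]]] := cover_IH hs' ltN'.
exists (x0 |: CX), CY; split; first exact: cover_delX.
by rewrite cardsU1; have := leq_b1 (x0 \notin CX); lia.
Qed.

Lemma high_degY_cover h y0 :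
  edge_degree_sum_ge h (a + q.+1 + 1) -> nedges h < q.+2 * a ->
  a <= degY h y0 -> has_cover_le h q.+1.
Proof.
move=> hs ltN le_a; apply: has_cover_le_btr; apply: (high_degX_cover (x0 := y0)) => //.
- exact: edge_degree_sum_ge_btr.
- by rewrite nedges_btr.
Qed.

End HighDegree.

Theorem small_vertex_cover q h :
  edge_degree_sum_ge h (a + q + 1) -> nedges h < q.+1 * a -> has_cover_le h q.
Proof.
elim: q h => [|q IH] h hs ltN.
  apply: small_degrees_cover => // [x | y].
  - by have := degX_le_nedges h x; lia.
  - by have := degY_le_nedges h y; lia.
case: (boolP [exists x, a <= degX h x]) => [/existsP [x0] | /existsPn ltX].
  exact: high_degX_cover.
case: (boolP [exists y, a <= degY h y]) => [/existsP [y0] | /existsPn ltY].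
  exact: high_degY_cover.
by apply: small_degrees_cover => // [x | y]; rewrite ltnNge; [exact: ltX | exact: ltY].
Qed.

End VertexCover.

Definition min_cover h CX CY :=
  cover h CX CY /\
  forall CX' CY', cover h CX' CY' -> #|CX| + #|CY| <= #|CX'| + #|CY'|.

Lemma min_cover_exists h m :
  has_cover_le h m -> exists CX CY, min_cover h CX CY /\ #|CX| + #|CY| <= m.
Proof.
case=> CX0 [CY0 [hc0 le_m]].
have [[CX CY] /= hc minC] := @arg_minnP _ (CX0, CY0) (fun C => cover h C.1 C.2)
  (fun C => #|C.1| + #|C.2|) hc0.
exists CX, CY; split; last exact: leq_trans (minC (CX0, CY0) hc0) le_m.
by split=> // CX' CY' hc'; apply: (minC (CX', CY')).
Qed.

Lemma min_cover_btr h CX CY : min_cover h CX CY -> min_cover (btr h) CY CX.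
Proof.
case=> hc minC; split; first by rewrite cover_btr.
by move=> CY' CX'; rewrite cover_btr addnC [leqRHS]addnC; apply: minC.
Qed.

Lemma min_cover_private_nbrX h CX CY x :
  min_cover h CX CY -> x \in CX -> exists2 y, h x y & y \notin CY.
Proof.
case=> /coverP hc minC xCX.
case: (boolP [exists y, h x y && (y \notin CY)]) => [/existsP [y /andP []] | ].
  by exists y.
move=> /existsPn nbrC.
exfalso; have /minC : cover h (CX :\ x) CY.
  apply/coverP => x' y hxy; rewrite in_setD1.
  case: (eqVneq x' x) hxy => [-> | _] hxy /=; last exact: hc.
  by move: (nbrC y); rewrite hxy negbK.
by rewrite (cardsD1 x CX) xCX add1n addSn ltnn.
Qed.

Lemma min_cover_degX h s CX CY x :
  edge_degree_sum_ge h s -> min_cover h CX CY -> x \in CX -> s <= #|CX| + degX h x.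
Proof.
move=> hs minC xCX; have [y hxy yNCY] := min_cover_private_nbrX minC xCX.
have le_degY : degY h y <= #|CX|.
  apply/subset_leq_card/subsetP => x'; rewrite inE => /(coverP _ _ _ minC.1).
  by rewrite (negbTE yNCY) orbF.
by have := hs x y hxy; lia.
Qed.

Lemma min_cover_degY h s CX CY y :
  edge_degree_sum_ge h s -> min_cover h CX CY -> y \in CY -> s <= #|CY| + degY h y.
Proof.
move=> hs /min_cover_btr minC yCY.
exact: (min_cover_degX (edge_degree_sum_ge_btr hs) minC yCY).
Qed.

Lemma complete_onS G A B A' B' :
  complete_on G A B -> A' \subset A -> B' \subset B -> complete_on G A' B'.
Proof. by move=> cG /subsetP sA /subsetP sB x y /sA xA /sB yB; apply: cG. Qed.

Lemma has_Kbip_order_of_complete G A B m :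
  complete_on G A B -> m <= #|A| + #|B| -> has_Kbip_order G m.
Proof.
move=> cG le_m; case: (leqP m #|A|) => [le_mA | lt_Am].
  have [A' sA' cardA'] := exists_subset_card le_mA.
  exists A', set0; rewrite cards0 addn0; split=> // x y _; by rewrite inE.
have le_rest : m - #|A| <= #|B| by lia.
have [B' sB' cardB'] := exists_subset_card le_rest.
exists A, B'; split; [exact: complete_onS cG (subxx A) sB' | lia].
Qed.

Lemma has_Kab_of_complete G A B a b :
  complete_on G A B -> a <= #|A| -> b <= #|B| -> has_Kab G a b.
Proof.
move=> cG /exists_subset_card [A' sA' cardA'] /exists_subset_card [B' sB' cardB'].
by exists A', B'; split; [exact: complete_onS cG sA' sB' | left].
Qed.

Lemma has_KabC G a b : has_Kab G a b -> has_Kab G b a.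
Proof.
by case=> A [B [cG cards]]; exists A, B; split; last by case: cards; [right | left].
Qed.

Lemma perm_of_fibers (f g : 'I_n -> nat) :
  (forall c, #|[set i | f i == c]| = #|[set i | g i == c]|) ->
  exists s : {perm 'I_n}, forall i, g (s i) = f i.
Proof.
move=> fibers.
have count_fiber F c : count_mem c (mktuple F) = #|[set i | F i == c]|.
  rewrite /= count_map cardsE cardE size_filter enumT.
  by apply: eq_count => i; rewrite /= eq_sym.
have /tuple_permP [s /val_inj eq_fg] : perm_eq (mktuple f) (mktuple g).
  by apply/allP => c _; rewrite /= !count_fiber fibers.
exists s => i; have := congr1 (fun t => tnth t i) eq_fg.
by rewrite /= !tnth_mktuple => ->.
Qed.

Lemma bip_iso_of_classes G H (f g f' g' : 'I_n -> nat) :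
  (forall x y x' y', f x = f' x' -> g y = g' y' -> G x y = H x' y') ->
  (forall c, #|[set x | f x == c]| = #|[set x | f' x == c]|) ->
  (forall c, #|[set y | g y == c]| = #|[set y | g' y == c]|) ->
  bip_iso G H.
Proof.
move=> adj /perm_of_fibers [s hs] /perm_of_fibers [t ht].
by exists s, t; left => x y; apply: adj.
Qed.

Lemma card_ord_range lo hi : hi <= n -> #|[set i : 'I_n | lo <= i < hi]| = hi - lo.
Proof.
move=> le_hi_n; rewrite cardsE cardE size_filter -enumT.
rewrite (eq_count (a2 := preim val (fun i => lo <= i < hi))) // -count_map val_enum_ord.
by rewrite count_iota_range; lia.
Qed.

(* [nth] returns the default 0 for the classes c > 3, which are empty. *)
Lemma card_interval_class b1 b2 c : b1 <= b2 <= n ->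
  #|[set i : 'I_n | interval_class b1 b2 i == c]|
  = nth 0 [:: 0; b1; b2 - b1; n - b2] c.
Proof.
move=> /andP [le12 le2n].
transitivity
  #|[set i : 'I_n | nth 0 [:: 0; 0; b1; b2] c <= i < nth 0 [:: 0; b1; b2; n] c]|.
  apply: eq_card => i; rewrite !inE /interval_class; have := ltn_ord i.
  by case: c => [|[|[|[|c]]]] /=; case: (ltnP i b1); case: (ltnP i b2); lia.
by rewrite card_ord_range; case: c => [|[|[|[|c]]]]; rewrite /= ?nth_nil; lia.
Qed.

(* Class 3 is {x0}, class 2 the other neighbours of y0 and class 1 the rest:
   these are the parts X3, X2, X1 of N^{p,1} if x0 y0 is an edge, and of
   N^{p,2} otherwise. *)
Definition star_class G x0 y0 x : nat :=
  if x == x0 then 3 else if G x y0 then 2 else 1.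

Lemma card_star_class G x0 y0 c :
  #|[set x | star_class G x0 y0 x == c]|
  = nth 0 [:: 0; n - degY G y0 - ~~ G x0 y0; degY G y0 - G x0 y0; 1] c.
Proof.
have -> : [set x | star_class G x0 y0 x == c] =
          nth set0 [:: set0; [set x | ~~ G x y0] :\ x0; [set x | G x y0] :\ x0; [set x0]] c.
  apply/setP => x; rewrite inE /star_class.
  by case: c => [|[|[|[|c]]]]; rewrite /= ?nth_nil !inE; case: (x == x0); case: (G x y0).
have nbrs : degY G y0 = G x0 y0 + #|[set x | G x y0] :\ x0|.
  by rewrite /degY (cardsD1 x0) inE.
have non_nbrs : degY (bcompl G) y0 = ~~ G x0 y0 + #|[set x | ~~ G x y0] :\ x0|.
  by rewrite /degY (cardsD1 x0) inE.
have := degY_bcompl G y0; case: (G x0 y0) nbrs non_nbrs => /= nbrs non_nbrs;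
  by case: c => [|[|[|[|c]]]]; rewrite /= ?nth_nil ?cards0 ?cards1; lia.
Qed.

Lemma card_cls1 p c : p + 3 <= n ->
  #|[set i : 'I_n | cls1 n p i == c]| = nth 0 [:: 0; n - p - 2; p + 1; 1] c.
Proof.
move=> le_n.
transitivity #|[set i : 'I_n | interval_class (n - p - 2) (n - 1) i == c]| => //.
by rewrite card_interval_class; [case: c => [|[|[|[|c]]]] /= | apply/andP]; lia.
Qed.

Lemma card_cls2 p c : p + 3 <= n ->
  #|[set i : 'I_n | cls2 n p i == c]| = nth 0 [:: 0; n - p - 3; p + 2; 1] c.
Proof.
move=> le_n.
transitivity #|[set i : 'I_n | interval_class (n - p - 3) (n - 1) i == c]| => //.
by rewrite card_interval_class; [case: c => [|[|[|[|c]]]] /= | apply/andP]; lia.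
Qed.

Lemma star_bip_iso G p x0 y0 :
  p + 3 <= n -> degX G x0 = p + 2 -> degY G y0 = p + 2 ->
  complete_on G [set~ x0] [set~ y0] ->
  bip_iso G (if G x0 y0 then N1 n p else N2 n p).
Proof.
move=> le_n degx0 degy0 cG.
have off_star x y : x != x0 -> y != y0 -> G x y by move=> ? ?; apply: cG; rewrite !inE.
pose cls i := if G x0 y0 then cls1 n p i else cls2 n p i.
apply: (bip_iso_of_classes (f := star_class G x0 y0) (g := star_class (btr G) y0 x0)
  (f' := fun i => cls i) (g' := fun i => cls i)) => [x y x' y' /= ex ey | c | c].
{ rewrite /cls in ex ey.
  case G00: (G x0 y0) ex ey => /= ex ey; rewrite /N1 /N2 /= -ex -ey /star_class /btr.
  all: case: (eqVneq x x0) => [xx0 | nx]; case: (eqVneq y y0) => [yy0 | ny];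
    rewrite ?xx0 ?yy0 /= ?G00 //.
  all: by [case: (G x0 y) | case: (G x y0)
          | rewrite off_star //; case: (G x y0); case: (G x0 y)]. }
all: rewrite card_star_class ?degy0 ?degY_btr ?degx0 /cls /btr.
all: case: (G x0 y0); rewrite /= ?card_cls1 ?card_cls2 //.
all: by case: c => [|[|[|[|c]]]] /=; lia.
Qed.

Lemma two_sided_min_cover k p G CX CY x0 y0 :
  p < n -> closed_bip (n + p + 2) G -> mindeg_ge G k ->
  min_cover (bcompl G) CX CY -> #|CX| + #|CY| <= k - p -> x0 \in CX -> y0 \in CY ->
  [/\ k = p + 2, CX = [set x0], CY = [set y0], degX G x0 = k & degY G y0 = k].
Proof.
move=> lt_pn clG [minX minY] minC le_kp x0CX y0CY.
have hs := closed_bip_compl clG.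
have bound_x : degX G x0 <= #|CX| + p + 1.
  by have := min_cover_degX hs minC x0CX; have := degX_bcompl G x0; lia.
have bound_y : degY G y0 <= #|CY| + p + 1.
  by have := min_cover_degY hs minC y0CY; have := degY_bcompl G y0; lia.
have ne_CX : 0 < #|CX| by apply/card_gt0P; exists x0.
have ne_CY : 0 < #|CY| by apply/card_gt0P; exists y0.
have le_kx0 := minX x0; have le_ky0 := minY y0.
have [k_eq cardCX cardCY degx0 degy0] :
  [/\ k = p + 2, #|CX| = 1, #|CY| = 1, degX G x0 = k & degY G y0 = k] by split; lia.
split=> //; apply/esym/eqP; rewrite eqEcard sub1set ?x0CX ?y0CY cards1 ?cardCX ?cardCY //.
Qed.

Lemma closed_dense_bcompl_cover k p G :
  p <= k -> 2 * k - p + 2 <= n -> closed_bip (n + p + 2) G ->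
  n * (n - k + p - 1) + (k + 2) * (k - p + 1) < nedges G ->
  has_cover_le (bcompl G) (k - p).
Proof.
move=> le_pk le_n clG.
pose a := n - k - 2; have def_n : n = a + k + 2 by rewrite /a; lia.
pose q := k - p; have def_k : k = q + p by rewrite /q; lia.
clearbody a q.
have -> : n - k + p - 1 = a + p + 1 by lia.
have -> : k - p + 1 = q.+1 by lia.
have -> : k - p = q by lia.
move=> many_edges; apply: (small_vertex_cover (a := a)).
  have -> : a + q + 1 = (2 * n).+1 - (n + p + 2) by lia.
  exact: closed_bip_compl.
have split_nn : n * n = n * (a + p + 1) + (k + 2) * q.+1 + q.+1 * a.
  by rewrite {1}def_n def_k; nia.
by have := nedges_bcompl G; lia.
Qed.

End BipartiteGraphs.

Theorem lemma3p1 (k p n : nat) (G : bigraph n) :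
  p <= k -> 2 * k - p + 2 <= n ->
  closed_bip (n + p + 2) G ->
  n * (n - k + p - 1) + (k + 2) * (k - p + 1) < nedges G ->
  has_Kbip_order G (2 * n - k + p) /\
  (mindeg_ge G k ->
     has_Kab G n (n - k + p) \/
     (k = p + 2 /\ (bip_iso G (N1 n p) \/ bip_iso G (N2 n p)))).
Proof.
move=> le_pk le_n clG many_edges.
have hcover := closed_dense_bcompl_cover le_pk le_n clG many_edges.
split.
  case: hcover => CX [CY [/cover_bcompl_complete cG le_q]].
  by apply: (has_Kbip_order_of_complete cG); rewrite !cardsC_ord; lia.
move=> mindeg; have [CX [CY [minC le_q]]] := min_cover_exists hcover.
have cG := cover_bcompl_complete minC.1.
have [CX0 | [x0 x0CX]] := set_0Vmem CX.
  by left; apply: (has_Kab_of_complete cG); rewrite !cardsC_ord ?CX0 ?cards0; lia.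
have [CY0 | [y0 y0CY]] := set_0Vmem CY.
  by left; apply/has_KabC/(has_Kab_of_complete cG); rewrite !cardsC_ord ?CY0 ?cards0; lia.
have [|k_eq eCX eCY degx0 degy0] := two_sided_min_cover _ clG mindeg minC le_q x0CX y0CY.
  by lia.
rewrite eCX eCY k_eq in cG degx0 degy0; right; split=> //.
have := star_bip_iso (p := p) _ degx0 degy0 cG.
by case: (G x0 y0) => iso; [left | right]; apply: iso; lia.
Qed.
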